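(* Let $W$ be a nonempty closed subset of $\mathbb{R}$ and let $\alpha,\beta,z\in\mathrm{Aut}(W)$. Suppose $\mathrm{Fix}_W(z)=\emptyset$ and $z$ commutes with both $\alpha$ and $\beta$. If $\mathrm{Fix}_W(\alpha)\ne\emptyset\ne\mathrm{Fix}_W(\beta)$ and $\mathrm{Fix}_W(\alpha)\cap\mathrm{Fix}_W(\beta)=\emptyset$, then $\langle\alpha,\beta\rangle$ contains a nonabelian free subgroup.
   Context: For a totally ordered set $X$ (here $W\subseteq\mathbb{R}$ with the induced order), $\mathrm{Aut}(X)$ is the group of order preserving bijections $X\to X$. For a group $G$ acting on $Y$ and $H\subseteq G$, $\mathrm{Fix}_Y(H)=\{y\in Y: hy=y\ \forall h\in H\}$, and $\mathrm{Fix}_Y(g)=\mathrm{Fix}_Y(\{g\})$. *)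

From Stdlib Require Import Reals Rtopology List Bool.
Open Scope R_scope.

Definition Wt (W : R -> Prop) : Type := {x : R | W x}.

Definition is_aut (W : R -> Prop) (f : Wt W -> Wt W) : Prop :=
  (exists g : Wt W -> Wt W, (forall x, g (f x) = x) /\ (forall x, f (g x) = x)) /\
  (forall x y : Wt W, proj1_sig x < proj1_sig y -> proj1_sig (f x) < proj1_sig (f y)).

Definition Fix (W : R -> Prop) (f : Wt W -> Wt W) : Wt W -> Prop := fun x => f x = x.

Inductive gen2 (W : R -> Prop) (a b : Wt W -> Wt W) : (Wt W -> Wt W) -> Prop :=
| gen2_a : gen2 W a b a
| gen2_b : gen2 W a b b
| gen2_id : gen2 W a b (fun x => x)
| gen2_comp : forall f g, gen2 W a b f -> gen2 W a b g -> gen2 W a b (fun x => f (g x))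
| gen2_inv : forall f f', gen2 W a b f ->
    (forall x, f' (f x) = x) -> (forall x, f (f' x) = x) -> gen2 W a b f'.

(* Words in the free group on two letters: a letter is (which generator, inverted?). *)
Definition letter := (bool * bool)%type.

Fixpoint reduced (w : list letter) : Prop :=
  match w with
  | nil => True
  | l :: w' =>
      match w' with
      | nil => True
      | l' :: _ => ~ (fst l = fst l' /\ snd l = negb (snd l')) /\ reduced w'
      end
  end.

Definition eval_letter {T : Type} (f f' g g' : T -> T) (l : letter) : T -> T :=
  match l with
  | (false, false) => f
  | (false, true) => f'
  | (true, false) => g
  | (true, true) => g'
  end.

Fixpoint eval_word {T : Type} (f f' g g' : T -> T) (w : list letter) : T -> T :=
  match w with
  | nil => fun x => x
  | l :: w' => fun x => eval_letter f f' g g' l (eval_word f f' g g' w' x)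
  end.

Definition contains_nonabelian_free (W : R -> Prop) (H : (Wt W -> Wt W) -> Prop) : Prop :=
  exists f f' g g' : Wt W -> Wt W,
    H f /\ H g /\
    (forall x, f' (f x) = x) /\ (forall x, f (f' x) = x) /\
    (forall x, g' (g x) = x) /\ (forall x, g (g' x) = x) /\
    (forall w : list letter, w <> nil -> reduced w ->
       exists x, eval_word f f' g g' w x <> x).

From Stdlib Require Import Reals Rtopology List Bool Lra Lia ZArith
  Classical ClassicalEpsilon ProofIrrelevance.
Open Scope R_scope.

(* Since [z] has no fixed point it moves every point of [W] in the same direction, and [W]
   can be recoordinatized so that [z] becomes the unit translation [x |-> x + 1].  As [alpha]
   and [beta] commute with [z], their fixed point sets are closed and invariant under this
   translation, so by compactness of a fundamental domain they lie at some positive distance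
   [d] from each other.  The same compactness shows that a large power [alpha^N] (and its
   inverse) pushes every point at distance [>= d/2] from [Fix(alpha)] into the open
   [d/2]-neighbourhood of [Fix(alpha)], uniformly; likewise for [beta].  The ping-pong lemma
   applied to these two neighbourhoods shows that [alpha^N] and [beta^M] generate a free
   group. *)

(** * Closed chains *)

Definition is_sup_on {T} (f : T -> R) (S : T -> Prop) (s : T) : Prop :=
  (forall x, S x -> f x <= f s) /\ (forall e, 0 < e -> exists x, S x /\ f s - e < f x).

Definition is_inf_on {T} (f : T -> R) (S : T -> Prop) (s : T) : Prop :=
  (forall x, S x -> f s <= f x) /\ (forall e, 0 < e -> exists x, S x /\ f x < f s + e).

(* A chain [T] embedded in [R] by [coord] with closed image: bounded nonempty subsets have
   their supremum and infimum in [T].  A closed [W] with the order of [R] is the model. *)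
Record closed_chain (T : Type) := {
  coord :> T -> R;
  coord_inj : forall x y, coord x = coord y -> x = y;
  has_sup : forall S : T -> Prop, (exists x, S x) -> (exists M, forall x, S x -> coord x <= M) ->
    exists s, is_sup_on coord S s;
  has_inf : forall S : T -> Prop, (exists x, S x) -> (exists M, forall x, S x -> M <= coord x) ->
    exists s, is_inf_on coord S s
}.
Arguments coord {T} c x.
Arguments coord_inj {T} c x y.
Arguments has_sup {T} c S.
Arguments has_inf {T} c S.

Definition dual {T} (o : closed_chain T) : closed_chain T.
Proof.
  refine {| coord := fun x => - o x |}.
  - intros x y H. apply (coord_inj o). lra.
  - intros S Hne [M HM]. destruct (has_inf o S Hne) as [s [H1 H2]].
    { exists (- M). intros x Sx. specialize (HM x Sx). lra. }
    exists s. split.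
    + intros x Sx. specialize (H1 x Sx). lra.
    + intros e He. destruct (H2 e He) as [x [Sx Hx]]. exists x. split; auto. lra.
  - intros S Hne [M HM]. destruct (has_sup o S Hne) as [s [H1 H2]].
    { exists (- M). intros x Sx. specialize (HM x Sx). lra. }
    exists s. split.
    + intros x Sx. specialize (H1 x Sx). lra.
    + intros e He. destruct (H2 e He) as [x [Sx Hx]]. exists x. split; auto. lra.
Defined.

Lemma dual_coord {T} (o : closed_chain T) x : dual o x = - o x.
Proof. reflexivity. Qed.

Definition closed_values {T} (f : T -> R) : Prop :=
  forall m, (forall e, 0 < e -> exists x, Rabs (f x - m) < e) -> exists x, f x = m.

Lemma sup_of_closed_values {T} (f : T -> R) : closed_values f ->
  forall S, (exists x, S x) -> (exists M, forall x, S x -> f x <= M) -> exists s, is_sup_on f S s.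
Proof.
  intros Hclosed S [x0 Sx0] [M HM].
  set (E := fun r => exists x, S x /\ r = f x).
  destruct (completeness E) as [m [Hub Hlub]].
  { exists M. intros r [x [Sx ->]]. auto. }
  { exists (f x0), x0. auto. }
  assert (Happ : forall e, 0 < e -> exists x, S x /\ m - e < f x).
  { intros e He. apply NNPP. intros Hnot.
    assert (m <= m - e); [|lra]. apply Hlub. intros r [x [Sx ->]].
    apply Rnot_lt_le. intros Hlt. apply Hnot. eauto. }
  destruct (Hclosed m) as [s Hs].
  { intros e He. destruct (Happ e He) as [x [Sx Hx]]. exists x.
    assert (f x <= m) by (apply Hub; exists x; auto). apply Rabs_def1; lra. }
  exists s. unfold is_sup_on. rewrite Hs. split.
  - intros x Sx. apply Hub. exists x. auto.
  - exact Happ.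
Qed.

Lemma closed_values_chain {T} (f : T -> R) : (forall x y, f x = f y -> x = y) -> closed_values f ->
  exists o : closed_chain T, forall x, o x = f x.
Proof.
  intros Hinj Hclosed.
  assert (Hinf : forall S, (exists x, S x) -> (exists M, forall x, S x -> M <= f x) ->
            exists s, is_inf_on f S s).
  { intros S Hne [M HM].
    destruct (sup_of_closed_values (fun x => - f x)) with (S := S) as [s [Hub Happ]]; auto.
    - intros m Hm. destruct (Hclosed (- m)) as [x Hx].
      + intros e He. destruct (Hm e He) as [x Hx]. exists x.
        now replace (f x - - m) with (- (- f x - m)) by ring; rewrite Rabs_Ropp.
      + exists x. lra.
    - exists (- M). intros x Sx. specialize (HM x Sx). lra.
    - exists s. split.
      + intros x Sx. specialize (Hub x Sx). lra.
      + intros e He. destruct (Happ e He) as [x [Sx Hx]]. exists x. split; auto. lra. }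
  exists {| coord := f; coord_inj := Hinj; has_sup := sup_of_closed_values f Hclosed;
            has_inf := Hinf |}.
  reflexivity.
Qed.

Lemma closed_set_chain (W : R -> Prop) : closed_set W ->
  exists o : closed_chain (Wt W), forall x, o x = proj1_sig x.
Proof.
  intros HW. apply closed_values_chain.
  - intros [x Hx] [y Hy]. simpl. intros ->. f_equal. apply proof_irrelevance.
  - intros m Hm. assert (Wm : W m).
    { apply NNPP. intros Hnot. destruct (HW m Hnot) as [d Hd].
      destruct (Hm d (cond_pos d)) as [[x Wx] Hx]. exact (Hd x Hx Wx). }
    exists (exist W m Wm). reflexivity.
Qed.

Definition increasing {T} (o : closed_chain T) (h : T -> T) : Prop :=
  forall x y, o x < o y -> o (h x) < o (h y).

Definition inverse {T} (h hi : T -> T) : Prop :=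
  (forall x, hi (h x) = x) /\ (forall x, h (hi x) = x).

Section IncreasingMaps.
Context {T : Type} (o : closed_chain T) (h hi : T -> T).
Hypotheses (h_incr : increasing o h) (h_inv : inverse h hi).

Lemma increasing_le x y : o x <= o y -> o (h x) <= o (h y).
Proof.
  intros Hxy. destruct (Rle_lt_or_eq_dec _ _ Hxy) as [Hlt|Heq].
  - left. apply h_incr. exact Hlt.
  - rewrite (coord_inj o x y Heq). lra.
Qed.

Lemma increasing_lt_rev x y : o (h x) < o (h y) -> o x < o y.
Proof.
  intros Hxy. destruct (Rlt_or_le (o x) (o y)) as [|Hle]; auto.
  apply increasing_le in Hle. lra.
Qed.

Lemma increasing_inverse : increasing o hi.
Proof.
  intros x y Hxy. apply increasing_lt_rev. rewrite !(proj2 h_inv). exact Hxy.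
Qed.

Lemma increasing_iter n : increasing o (Nat.iter n h).
Proof. induction n as [|n IH]; intros x y Hxy; simpl; auto. Qed.

Lemma inverse_fixed a : h a = a -> hi a = a.
Proof. intros Ha. rewrite <- Ha at 1. apply (proj1 h_inv). Qed.

End IncreasingMaps.

Lemma increasing_dual {T} (o : closed_chain T) h : increasing o h -> increasing (dual o) h.
Proof. intros H x y. rewrite !dual_coord. intros Hxy. specialize (H y x). lra. Qed.

Lemma inverse_sym {T} (h hi : T -> T) : inverse h hi -> inverse hi h.
Proof. intros [H1 H2]. split; assumption. Qed.

Lemma inverse_iter {T} (h hi : T -> T) n : inverse h hi -> inverse (Nat.iter n h) (Nat.iter n hi).
Proof.
  intros [H1 H2]. split; induction n as [|n IH]; intros x; auto.
  - rewrite (Nat.iter_succ n _ h), (Nat.iter_succ_r n _ hi), H1. apply IH.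
  - rewrite (Nat.iter_succ n _ hi), (Nat.iter_succ_r n _ h), H2. apply IH.
Qed.

Lemma iter_fixed {T} (h : T -> T) n a : h a = a -> Nat.iter n h a = a.
Proof. intros Ha. induction n as [|n IH]; simpl; auto. rewrite IH. exact Ha. Qed.

Definition orbit {T} (h : T -> T) (x : T) : T -> Prop := fun y => exists n, y = Nat.iter n h x.

Definition commute {T} (h g : T -> T) : Prop := forall x, h (g x) = g (h x).

Lemma commute_inverse {T} (h hi g : T -> T) : inverse h hi -> commute h g -> commute hi g.
Proof.
  intros [H1 H2] Hc x. rewrite <- (H1 (g (hi x))), Hc, H2. reflexivity.
Qed.

Lemma commute_sym {T} (h g : T -> T) : commute h g -> commute g h.
Proof. intros H x. symmetry. apply H. Qed.

Lemma iter_mul {X} (h : X -> X) n m x : Nat.iter (n * m) h x = Nat.iter n (Nat.iter m h) x.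
Proof. induction n as [|n IH]; simpl; auto. rewrite Nat.iter_add, IH. reflexivity. Qed.

(** * Fixed points of increasing bijections *)

Section FixedPoints.
Context {T : Type} (o : closed_chain T) (h hi : T -> T).
Hypotheses (h_incr : increasing o h) (h_inv : inverse h hi).

(* [h s] can lie neither below nor above [s]: elements of [S] close to [s] would be sent past it. *)
Lemma sup_fixed S s : is_sup_on o S s -> (forall x, S x -> o x <= o (h x) <= o s) -> h s = s.
Proof.
  intros [Hub Happ] HS. apply (coord_inj o).
  destruct (Rtotal_order (o (h s)) (o s)) as [Hlt|[Heq|Hgt]]; auto; exfalso.
  - destruct (Happ (o s - o (h s))) as [x [Sx Hx]]; [lra|].
    pose proof (HS x Sx). pose proof (increasing_le o h h_incr x s (Hub x Sx)). lra.
  - assert (His : o (hi s) < o s).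
    { apply (increasing_lt_rev o h h_incr). rewrite (proj2 h_inv). exact Hgt. }
    destruct (Happ (o s - o (hi s))) as [x [Sx Hx]]; [lra|].
    assert (Hhx : o s < o (h x)).
    { rewrite <- (proj2 h_inv s) at 1. apply h_incr. lra. }
    pose proof (HS x Sx). lra.
Qed.

Lemma orbit_step x n : o x < o (h x) -> o (Nat.iter n h x) < o (Nat.iter (S n) h x).
Proof. intros Hx. rewrite Nat.iter_succ_r. apply (increasing_iter o h h_incr). exact Hx. Qed.

Lemma orbit_le x n m : o x < o (h x) -> (n <= m)%nat ->
  o (Nat.iter n h x) <= o (Nat.iter m h x).
Proof.
  intros Hx Hnm. induction Hnm as [|m _ IH]; [lra|].
  pose proof (orbit_step x m Hx). lra.
Qed.

Lemma orbit_sup_fixed x : o x < o (h x) -> (exists M, forall n, o (Nat.iter n h x) <= M) ->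
  exists s, h s = s /\ is_sup_on o (orbit h x) s.
Proof.
  intros Hx [M HM].
  destruct (has_sup o (orbit h x)) as [s Hs].
  - exists x, O. reflexivity.
  - exists M. intros y [n ->]. apply HM.
  - exists s. split; auto. apply (sup_fixed (orbit h x)); auto.
    intros y [n ->]. split.
    + left. apply orbit_step. exact Hx.
    + apply (proj1 Hs). exists (S n). reflexivity.
Qed.

Lemma fixed_between x y : o x < o y -> o x < o (h x) -> o (h y) < o y ->
  exists s, h s = s /\ o x <= o s <= o y.
Proof.
  intros Hxy Hx Hy.
  assert (Hbound : forall n, o (Nat.iter n h x) < o y).
  { induction n as [|n IH]; simpl; auto. pose proof (h_incr _ _ IH). lra. }
  destruct (orbit_sup_fixed x Hx) as [s [Hs [Hub Happ]]].
  { exists (o y). intros n. left. apply Hbound. }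
  exists s. split; auto. split.
  - apply (Hub x). exists O. reflexivity.
  - destruct (Rle_or_lt (o s) (o y)) as [|Hlt]; auto.
    destruct (Happ (o s - o y)) as [z [[n ->] Hz]]; [lra|].
    pose proof (Hbound n). lra.
Qed.

Lemma fixed_approx_below r : (forall rho, 0 < rho -> exists a, h a = a /\ r - rho < o a <= r) ->
  exists a, h a = a /\ o a = r.
Proof.
  intros Happ.
  destruct (has_sup o (fun a => h a = a /\ o a <= r)) as [s [Hub Hs]].
  - destruct (Happ 1) as [a Ha]; [lra|]. exists a. tauto.
  - exists r. intros a [_ Ha]. exact Ha.
  - assert (Hsr : o s <= r).
    { destruct (Rle_or_lt (o s) r) as [|Hlt]; auto.
      destruct (Hs (o s - r)) as [a [[_ Ha] Ha']]; lra. }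
    exists s. split.
    + apply (sup_fixed (fun a => h a = a /\ o a <= r)); [split; auto|].
      intros x [Hx Hxr]. rewrite Hx. split; [lra|]. apply Hub. auto.
    + destruct (Rle_lt_or_eq_dec _ _ Hsr) as [Hlt|]; auto. exfalso.
      destruct (Happ (r - o s)) as [a [Ha Har]]; [lra|].
      assert (o a <= o s) by (apply Hub; split; [exact Ha|lra]). lra.
Qed.

End FixedPoints.

Lemma fixed_between_rev {T} (o : closed_chain T) h hi x y : increasing o h -> inverse h hi ->
  o x < o y -> o (h x) < o x -> o y < o (h y) -> exists s, h s = s /\ o x <= o s <= o y.
Proof.
  intros Hh Hinv Hxy Hx Hy.
  assert (Hx' : o x < o (hi x)).
  { apply (increasing_lt_rev o h Hh). rewrite (proj2 Hinv). exact Hx. }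
  assert (Hy' : o (hi y) < o y).
  { apply (increasing_lt_rev o h Hh). rewrite (proj2 Hinv). exact Hy. }
  destruct (fixed_between o hi h (increasing_inverse o h hi Hh Hinv) (inverse_sym h hi Hinv)
              x y Hxy Hx' Hy') as [s [Hs Hsb]].
  exists s. split; auto. apply (inverse_fixed hi h (inverse_sym h hi Hinv)). exact Hs.
Qed.

Lemma fixed_point_free_sign {T} (o : closed_chain T) h hi : increasing o h -> inverse h hi ->
  (forall x, h x <> x) -> (forall x, o x < o (h x)) \/ (forall x, o (h x) < o x).
Proof.
  intros Hh Hinv Hnofix.
  assert (Hmove : forall x, o x < o (h x) \/ o (h x) < o x).
  { intros x. destruct (Rtotal_order (o x) (o (h x))) as [|[Heq|]]; auto.
    exfalso. apply (Hnofix x). symmetry. apply (coord_inj o). exact Heq. }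
  destruct (classic (forall x, o x < o (h x))) as [|Hnot]; auto. right.
  apply not_all_ex_not in Hnot. destruct Hnot as [x Hx].
  assert (Hxd : o (h x) < o x) by (destruct (Hmove x); [contradiction|assumption]).
  intros y. destruct (Hmove y) as [Hyu|]; auto. exfalso.
  destruct (Rtotal_order (o x) (o y)) as [Hlt|[Heq|Hgt]].
  - destruct (fixed_between_rev o h hi x y Hh Hinv Hlt Hxd Hyu) as [s [Hs _]]. exact (Hnofix s Hs).
  - rewrite (coord_inj o x y Heq) in Hxd. lra.
  - destruct (fixed_between o h hi Hh Hinv y x Hgt Hyu Hxd) as [s [Hs _]]. exact (Hnofix s Hs).
Qed.

Lemma fixed_approx {T} (o : closed_chain T) h hi r : increasing o h -> inverse h hi ->
  (forall rho, 0 < rho -> exists a, h a = a /\ Rabs (o a - r) < rho) -> exists a, h a = a /\ o a = r.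
Proof.
  intros Hh Hinv Happ.
  destruct (classic (forall rho, 0 < rho -> exists a, h a = a /\ r - rho < o a <= r)) as [Hbelow|Hnot].
  - exact (fixed_approx_below o h hi Hh Hinv r Hbelow).
  - apply not_all_ex_not in Hnot. destruct Hnot as [rho0 Hrho0].
    apply imply_to_and in Hrho0. destruct Hrho0 as [Hrho0 Hgap].
    destruct (fixed_approx_below (dual o) h hi (increasing_dual o h Hh) Hinv (- r)) as [a [Ha Har]].
    + intros rho Hrho. destruct (Happ (Rmin rho rho0)) as [a [Ha Hdist]].
      { apply Rmin_glb_lt; assumption. }
      pose proof (Rmin_l rho rho0). pose proof (Rmin_r rho rho0).
      apply Rabs_def2 in Hdist. exists a. rewrite dual_coord. split; auto.
      destruct (Rle_or_lt (o a) r); [|lra].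
      exfalso. apply Hgap. exists a. split; auto. lra.
    + exists a. rewrite dual_coord in Har. split; auto. lra.
Qed.

Lemma fixed_points_closed {T} (o : closed_chain T) h hi r : increasing o h -> inverse h hi ->
  (forall a, h a = a -> o a <> r) ->
  exists rho, 0 < rho /\ forall a, h a = a -> rho <= Rabs (o a - r).
Proof.
  intros Hh Hinv Hr. apply NNPP. intros Hnot.
  destruct (fixed_approx o h hi r Hh Hinv) as [a [Ha Har]].
  - intros rho Hrho. apply NNPP. intros Hfar. apply Hnot. exists rho. split; auto.
    intros a Ha. apply Rnot_lt_le. intros Hlt. apply Hfar. eauto.
  - exact (Hr a Ha Har).
Qed.

Lemma window_hull {T} (o : closed_chain T) (S : T -> Prop) c r : (exists v, S v) ->
  (forall v, S v -> Rabs (o v - c) < r) ->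
  exists lo up, (forall v, S v -> o lo <= o v <= o up) /\ c - r <= o lo /\ o up <= c + r.
Proof.
  intros Hne Hwin.
  assert (Hwin' : forall v, S v -> c - r < o v < c + r)
    by (intros v Hv; specialize (Hwin v Hv); apply Rabs_def2 in Hwin; lra).
  destruct (has_inf o S Hne) as [lo [Hlo Hlo_app]].
  { exists (c - r). intros v Hv. specialize (Hwin' v Hv). lra. }
  destruct (has_sup o S Hne) as [up [Hup Hup_app]].
  { exists (c + r). intros v Hv. specialize (Hwin' v Hv). lra. }
  exists lo, up. split; [split; auto|]. split.
  - destruct (Rle_or_lt (c - r) (o lo)) as [|Hlt]; auto.
    destruct (Hlo_app (c - r - o lo)) as [v [Hv Hv']]; [lra|]. specialize (Hwin' v Hv). lra.
  - destruct (Rle_or_lt (o up) (c + r)) as [|Hlt]; auto.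
    destruct (Hup_app (o up - (c + r))) as [v [Hv Hv']]; [lra|]. specialize (Hwin' v Hv). lra.
Qed.

Definition near {T} (o : closed_chain T) (h : T -> T) (rho : R) (x : T) : Prop :=
  exists a, h a = a /\ Rabs (o x - o a) < rho.

Lemma near_inverse {T} (o : closed_chain T) h hi rho x : inverse h hi ->
  near o hi rho x -> near o h rho x.
Proof.
  intros Hinv [a [Ha Hax]]. exists a. split; auto.
  exact (inverse_fixed hi h (inverse_sym h hi Hinv) a Ha).
Qed.

Lemma near_dual {T} (o : closed_chain T) h rho x : near (dual o) h rho x -> near o h rho x.
Proof.
  intros [a [Ha Hax]]. exists a. split; auto.
  rewrite !dual_coord in Hax. rewrite <- Rabs_Ropp. now replace (- (o x - o a)) with (- o x - - o a) by ring.
Qed.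

(* The orbit of [lo] increases to a fixed point above the gap, and every orbit starting in
   [[lo, up]] is squeezed between it and that fixed point. *)
Lemma gap_converge_up {T} (o : closed_chain T) h hi lo up :
  increasing o h -> inverse h hi -> o lo <= o up ->
  (forall t, o lo <= o t <= o up -> h t <> t) -> o lo < o (h lo) ->
  (exists a, h a = a /\ o up < o a) ->
  forall rho, 0 < rho -> exists N, forall n v, (N <= n)%nat -> o lo <= o v <= o up ->
    near o h rho (Nat.iter n h v).
Proof.
  intros Hh Hinv Hlu Hgap Hlo [a [Ha Hua]] rho Hrho.
  destruct (orbit_sup_fixed o h hi Hh Hinv lo Hlo) as [s [Hs [Hub Happ]]].
  { exists (o a). intros n. rewrite <- (iter_fixed h n a Ha).
    apply (increasing_le o _ (increasing_iter o h Hh n)). lra. }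
  assert (Hlos : o lo <= o s) by (apply Hub; exists O; reflexivity).
  assert (Hus : o up < o s).
  { destruct (Rlt_or_le (o up) (o s)) as [|Hsu]; auto.
    exfalso. exact (Hgap s (conj Hlos Hsu) Hs). }
  destruct (Happ rho Hrho) as [y [[N ->] HN]].
  exists N. intros n v Hn Hv. exists s. split; auto.
  pose proof (orbit_le o h Hh lo N n Hlo Hn).
  assert (o (Nat.iter n h lo) <= o (Nat.iter n h v))
    by (apply (increasing_le o _ (increasing_iter o h Hh n)); lra).
  assert (o (Nat.iter n h v) <= o s).
  { rewrite <- (iter_fixed h n s Hs). apply (increasing_le o _ (increasing_iter o h Hh n)). lra. }
  apply Rabs_def1; lra.
Qed.

Lemma gap_converge {T} (o : closed_chain T) h hi lo up :
  increasing o h -> inverse h hi -> o lo <= o up ->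
  (forall t, o lo <= o t <= o up -> h t <> t) ->
  (exists a, h a = a /\ o up < o a) -> (exists a, h a = a /\ o a < o lo) ->
  forall rho, 0 < rho -> exists N, forall n v, (N <= n)%nat -> o lo <= o v <= o up ->
    near o h rho (Nat.iter n h v).
Proof.
  intros Hh Hinv Hlu Hgap Habove Hbelow rho Hrho.
  destruct (Rtotal_order (o lo) (o (h lo))) as [Hlo|[Heq|Hlo]].
  - exact (gap_converge_up o h hi lo up Hh Hinv Hlu Hgap Hlo Habove rho Hrho).
  - exfalso. apply (Hgap lo); [lra|]. symmetry. apply (coord_inj o). exact Heq.
  - assert (Hup : o (h up) < o up).
    { destruct (Rtotal_order (o (h up)) (o up)) as [|[Heq|Hup]]; auto; exfalso.
      - apply (Hgap up); [lra|]. apply (coord_inj o). exact Heq.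
      - destruct (Rle_lt_or_eq_dec _ _ Hlu) as [Hlt|Heq].
        + destruct (fixed_between_rev o h hi lo up Hh Hinv Hlt Hlo Hup) as [s [Hs Hsb]].
          exact (Hgap s Hsb Hs).
        + rewrite (coord_inj o _ _ Heq) in Hlo. lra. }
    destruct (gap_converge_up (dual o) h hi up lo (increasing_dual o h Hh) Hinv)
      with (rho := rho) as [N HN]; rewrite ?dual_coord; auto; try lra.
    + intros t. rewrite !dual_coord. intros Ht. apply Hgap. lra.
    + destruct Hbelow as [a [Ha Hal]]. exists a. rewrite !dual_coord. split; [exact Ha|lra].
    + exists N. intros n v Hn Hv. apply near_dual. apply HN; auto. rewrite !dual_coord. lra.
Qed.

Lemma near_fixed {T} (o : closed_chain T) h rho a : h a = a -> 0 < rho -> near o h rho a.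
Proof. intros Ha Hrho. exists a. split; auto. unfold Rminus. rewrite Rplus_opp_r, Rabs_R0. exact Hrho. Qed.

Lemma near_separated {T} (o : closed_chain T) h g d x :
  (forall a b, h a = a -> g b = b -> d <= Rabs (o a - o b)) ->
  near o g (d / 2) x -> ~ near o h (d / 2) x.
Proof.
  intros Hsep [b [Hb Hxb]] [a [Ha Hxa]]. specialize (Hsep a b Ha Hb).
  assert (Rabs (o a - o b) <= Rabs (o x - o a) + Rabs (o x - o b)).
  { replace (o a - o b) with (- (o x - o a) + (o x - o b)) by ring.
    rewrite <- (Rabs_Ropp (o x - o a)). apply Rabs_triang. }
  lra.
Qed.

(** * Periodic chains *)

Lemma uniform_on_unit_interval (P : R -> nat -> Prop) :
  (forall y n m, (n <= m)%nat -> P y n -> P y m) ->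
  (forall x, 0 <= x <= 1 -> exists r, 0 < r /\ exists N, forall y, Rabs (y - x) < r -> P y N) ->
  exists N, forall y, 0 <= y <= 1 -> P y N.
Proof.
  intros Hmono Hlocal.
  assert (Hchoice : forall x, {p : R * nat | 0 <= x <= 1 -> 0 < fst p /\
                 forall y, Rabs (y - x) < fst p -> P y (snd p)}).
  { intros x. apply constructive_indefinite_description.
    destruct (classic (0 <= x <= 1)) as [Hx|Hx].
    - destruct (Hlocal x Hx) as [r [Hr [N HN]]]. exists (r, N). auto.
    - exists (1, O). intros; contradiction. }
  set (rad := fun x => fst (proj1_sig (Hchoice x))).
  set (idx := fun x => snd (proj1_sig (Hchoice x))).
  assert (Hrad : forall x, 0 <= x <= 1 -> 0 < rad x /\ forall y, Rabs (y - x) < rad x -> P y (idx x)).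
  { intros x. unfold rad, idx. destruct (Hchoice x) as [p Hp]. exact Hp. }
  set (fam := mkfamily (fun x => 0 <= x <= 1) (fun x y => (0 <= x <= 1) /\ Rabs (y - x) < rad x)
                (fun x H => match H with ex_intro _ y Hy => proj1 Hy end)).
  destruct (compact_P3 0 1 fam) as [D [Hcov [l Hl]]].
  - split.
    + intros y Hy. exists y. simpl. split; auto.
      unfold Rminus. rewrite Rplus_opp_r, Rabs_R0. apply Hrad. exact Hy.
    + intros x y [Hx Hyx].
      assert (Hd : 0 < rad x - Rabs (y - x)) by lra.
      exists (mkposreal _ Hd). intros w Hw. unfold disc in Hw. simpl in Hw |- *. split; auto.
      replace (w - x) with ((w - y) + (y - x)) by ring.
      eapply Rle_lt_trans; [apply Rabs_triang|]. lra.
  - assert (Hfinite : exists N, forall x, In x l -> 0 <= x <= 1 ->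
                        forall y, Rabs (y - x) < rad x -> P y N).
    { clear Hl. induction l as [|x l [N HN]].
      - exists O. intros x [].
      - exists (Nat.max N (idx x)). intros x' [<-|Hin] Hx y Hy.
        + apply (Hmono _ (idx x)); [lia|]. apply Hrad; auto.
        + apply (Hmono _ N); [lia|]. apply (HN x'); auto. }
    destruct Hfinite as [N HN]. exists N. intros y Hy.
    destruct (Hcov y Hy) as [x [[Hx Hyx] HDx]].
    apply (HN x); auto. apply Hl. split; auto.
Qed.

Definition zpow {T} (t ti : T -> T) (k : Z) : T -> T :=
  if (0 <=? k)%Z then Nat.iter (Z.to_nat k) t else Nat.iter (Z.to_nat (- k)) ti.

Section IntegerPowers.
Context {T : Type} (t ti : T -> T) (t_inv : inverse t ti).

Lemma zpow_succ k x : zpow t ti (k + 1) x = t (zpow t ti k x).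
Proof.
  unfold zpow. destruct (Z.leb_spec 0 k), (Z.leb_spec 0 (k + 1)); try lia.
  - rewrite Z2Nat.inj_add by lia. rewrite Nat.add_comm. reflexivity.
  - replace k with (-1)%Z by lia. simpl. rewrite (proj2 t_inv). reflexivity.
  - replace (Z.to_nat (- k)) with (S (Z.to_nat (- (k + 1)))) by lia.
    simpl. rewrite (proj2 t_inv). reflexivity.
Qed.

Lemma zpow_pred k x : zpow t ti (k - 1) x = ti (zpow t ti k x).
Proof.
  replace k with ((k - 1) + 1)%Z at 2 by lia. rewrite zpow_succ. symmetry. apply (proj1 t_inv).
Qed.

Lemma zpow_add a b x : zpow t ti (a + b) x = zpow t ti a (zpow t ti b x).
Proof.
  induction a as [|a IH|a IH] using Z.peano_ind.
  - reflexivity.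
  - replace (Z.succ a + b)%Z with ((a + b) + 1)%Z by lia. rewrite zpow_succ, IH.
    rewrite <- Z.add_1_r. symmetry. apply zpow_succ.
  - replace (Z.pred a + b)%Z with ((a + b) - 1)%Z by lia. rewrite zpow_pred, IH.
    rewrite <- Z.sub_1_r. symmetry. apply zpow_pred.
Qed.

Lemma zpow_inverse k : inverse (zpow t ti k) (zpow t ti (- k)).
Proof.
  split; intros x; rewrite <- zpow_add; replace (_ + _)%Z with 0%Z by lia; reflexivity.
Qed.

Lemma zpow_increasing (o : closed_chain T) k : increasing o t -> increasing o (zpow t ti k).
Proof.
  intros Ht. unfold zpow. destruct (0 <=? k)%Z; apply increasing_iter; auto.
  apply (increasing_inverse o t ti Ht t_inv).
Qed.

Lemma commute_zpow (h : T -> T) k : commute h t ->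
  forall x, h (zpow t ti k x) = zpow t ti k (h x).
Proof.
  intros Hc. induction k as [|k IH|k IH] using Z.peano_ind; intros x.
  - reflexivity.
  - rewrite <- Z.add_1_r, !zpow_succ, Hc, IH. reflexivity.
  - rewrite <- Z.sub_1_r, !zpow_pred, <- IH. set (y := zpow t ti k x).
    rewrite <- (proj1 t_inv (h (ti y))), <- Hc, (proj2 t_inv). reflexivity.
Qed.

Lemma fixed_zpow (h : T -> T) k a : commute h t -> h a = a -> h (zpow t ti k a) = zpow t ti k a.
Proof. intros Hc Ha. rewrite (commute_zpow h k Hc), Ha. reflexivity. Qed.

End IntegerPowers.

Lemma zpow_of_nat {T} (t ti : T -> T) n x : zpow t ti (Z.of_nat n) x = Nat.iter n t x.
Proof. unfold zpow. destruct (Z.leb_spec 0 (Z.of_nat n)); [|lia]. rewrite Nat2Z.id. reflexivity. Qed.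

Lemma zpow_opp_of_nat {T} (t ti : T -> T) n x : zpow t ti (- Z.of_nat n) x = Nat.iter n ti x.
Proof.
  unfold zpow. destruct n as [|n]; [reflexivity|].
  destruct (Z.leb_spec 0 (- Z.of_nat (S n))); [lia|]. rewrite Z.opp_involutive, Nat2Z.id. reflexivity.
Qed.

Lemma commute_iter_zpow {T} (h t ti : T -> T) n k : inverse t ti -> commute h t ->
  forall x, Nat.iter n h (zpow t ti k x) = zpow t ti k (Nat.iter n h x).
Proof.
  intros Htinv Hc x. symmetry. apply Nat.iter_swap_gen. intros a. symmetry.
  apply (commute_zpow t ti Htinv h k Hc).
Qed.

Section Periodic.
Context {T : Type} (o : closed_chain T) (tau taui : T -> T).
Hypotheses (tau_inv : inverse tau taui) (tau_coord : forall x, o (tau x) = o x + 1).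

Lemma coord_zpow k x : o (zpow tau taui k x) = o x + IZR k.
Proof.
  induction k as [|k IH|k IH] using Z.peano_ind.
  - change (zpow tau taui 0 x) with x. rewrite Rplus_0_r. reflexivity.
  - rewrite <- Z.add_1_r, zpow_succ, tau_coord, IH, plus_IZR by exact tau_inv. ring.
  - rewrite <- Z.sub_1_r, zpow_pred, minus_IZR by exact tau_inv.
    assert (Hshift : forall y, o (taui y) = o y - 1).
    { intros y. rewrite <- (proj2 tau_inv y) at 2. rewrite tau_coord. ring. }
    rewrite Hshift, IH. ring.
Qed.

Lemma zpow_into_unit x : exists k, 0 <= o (zpow tau taui k x) <= 1.
Proof.
  exists (1 - up (o x))%Z. rewrite coord_zpow, minus_IZR.
  destruct (archimed (o x)). lra.
Qed.

Lemma near_zpow h rho k x : commute h tau -> near o h rho x -> near o h rho (zpow tau taui k x).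
Proof.
  intros Hc [a [Ha Hax]]. exists (zpow tau taui k a). split.
  - exact (fixed_zpow tau taui tau_inv h k a Hc Ha).
  - rewrite !coord_zpow. now replace (o x + IZR k - (o a + IZR k)) with (o x - o a) by ring.
Qed.

Lemma near_zpow_iff h rho k x : commute h tau -> near o h rho (zpow tau taui k x) <-> near o h rho x.
Proof.
  intros Hc. split; [|apply near_zpow; exact Hc].
  intros Hnear. rewrite <- (proj1 (zpow_inverse tau taui tau_inv k) x).
  apply near_zpow; assumption.
Qed.

Lemma fixed_above h M : commute h tau -> (exists a, h a = a) -> exists a, h a = a /\ M < o a.
Proof.
  intros Hc [a Ha]. exists (zpow tau taui (up (M - o a)) a). split.
  - exact (fixed_zpow tau taui tau_inv h _ a Hc Ha).
  - rewrite coord_zpow. destruct (archimed (M - o a)). lra.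
Qed.

Lemma fixed_below h M : commute h tau -> (exists a, h a = a) -> exists a, h a = a /\ o a < M.
Proof.
  intros Hc [a Ha]. exists (zpow tau taui (- up (o a - M)) a). split.
  - exact (fixed_zpow tau taui tau_inv h _ a Hc Ha).
  - rewrite coord_zpow, opp_IZR. destruct (archimed (o a - M)). lra.
Qed.

Section Convergence.
Context (h hi : T -> T) (rho : R).
Hypotheses (h_incr : increasing o h) (h_inv : inverse h hi) (h_comm : commute h tau)
  (h_fixed : exists a, h a = a) (rho_pos : 0 < rho).

Lemma local_uniform_convergence x : exists r, 0 < r /\ exists N, forall v,
  Rabs (o v - x) < r -> ~ near o h rho v ->
  forall n, (N <= n)%nat -> near o h rho (Nat.iter n h v) /\ near o h rho (Nat.iter n hi v).
Proof.
  exists (rho / 2). split; [lra|].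
  destruct (classic (exists v0, Rabs (o v0 - x) < rho / 2 /\ ~ near o h rho v0))
    as [[v0 [Hv0 Hfar]]|Hnone].
  2:{ exists O. intros v Hv Hfar. exfalso. eauto. }
  destruct (window_hull o (fun v => Rabs (o v - x) < rho / 2) x (rho / 2))
    as [lo [up [Hwindow [Hlo Hup]]]]; [eauto | auto |].
  pose proof (Hwindow v0 Hv0). apply Rabs_def2 in Hv0.
  (* The window is too short to contain a fixed point: it would be [rho]-near [v0]. *)
  assert (Hgap : forall t, o lo <= o t <= o up -> h t <> t).
  { intros t Ht Hfix. apply Hfar. exists t. split; auto. apply Rabs_def1; lra. }
  assert (hi_incr := increasing_inverse o h hi h_incr h_inv).
  assert (hi_inv := inverse_sym h hi h_inv).
  destruct (gap_converge o h hi lo up h_incr h_inv) with (rho := rho) as [N1 HN1];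
    auto; try lra.
  { apply fixed_above; auto. }
  { apply fixed_below; auto. }
  destruct (gap_converge o hi h lo up hi_incr hi_inv) with (rho := rho) as [N2 HN2];
    auto; try lra.
  { intros t Ht Hfix. exact (Hgap t Ht (inverse_fixed hi h hi_inv t Hfix)). }
  { destruct (fixed_above h (o up) h_comm h_fixed) as [a [Ha Hau]].
    exists a. split; [exact (inverse_fixed h hi h_inv a Ha) | exact Hau]. }
  { destruct (fixed_below h (o lo) h_comm h_fixed) as [a [Ha Hal]].
    exists a. split; [exact (inverse_fixed h hi h_inv a Ha) | exact Hal]. }
  exists (Nat.max N1 N2). intros v Hv Hfar_v n Hn. split.
  - apply HN1; [lia|]. apply Hwindow. exact Hv.
  - apply (near_inverse o h hi rho _ h_inv). apply HN2; [lia|]. apply Hwindow. exact Hv.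
Qed.

Lemma uniform_convergence : exists N, forall v, ~ near o h rho v ->
  forall n, (N <= n)%nat -> near o h rho (Nat.iter n h v) /\ near o h rho (Nat.iter n hi v).
Proof.
  destruct (uniform_on_unit_interval (fun y N => forall v, o v = y -> ~ near o h rho v ->
    forall n, (N <= n)%nat -> near o h rho (Nat.iter n h v) /\ near o h rho (Nat.iter n hi v)))
    as [N HN].
  - intros y n m Hnm H v Hv Hfar k Hk. apply H; auto. lia.
  - intros x _. destruct (local_uniform_convergence x) as [r [Hr [N HN]]].
    exists r. split; auto. exists N. intros y Hy v <-. apply HN. exact Hy.
  - exists N. intros v Hfar n Hn.
    assert (hi_comm := commute_inverse h hi tau h_inv h_comm).
    destruct (zpow_into_unit v) as [k Hk].
    destruct (HN _ Hk (zpow tau taui k v) eq_refl) with (n := n) as [H1 H2]; auto.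
    { rewrite near_zpow_iff; assumption. }
    rewrite (commute_iter_zpow h tau taui n k tau_inv h_comm) in H1.
    rewrite (commute_iter_zpow hi tau taui n k tau_inv hi_comm) in H2.
    rewrite near_zpow_iff in H1, H2 by assumption. split; assumption.
Qed.

End Convergence.

Lemma fixed_points_separated h hi g gi : increasing o h -> inverse h hi ->
  increasing o g -> inverse g gi -> commute h tau -> commute g tau ->
  (forall x, h x = x -> g x <> x) ->
  exists d, 0 < d /\ forall a b, h a = a -> g b = b -> d <= Rabs (o a - o b).
Proof.
  intros Hh Hhinv Hg Hginv Hhc Hgc Hdisj.
  destruct (uniform_on_unit_interval (fun y N => forall a b, h a = a -> g b = b -> o a = y ->
     / (INR N + 1) <= Rabs (o a - o b))) as [N HN].
  - intros y n m Hnm H a b Ha Hb Hy. eapply Rle_trans; [|exact (H a b Ha Hb Hy)].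
    apply Rinv_le_contravar; [pose proof (pos_INR n); lra|]. apply le_INR in Hnm. lra.
  - intros x _. destruct (classic (exists a, h a = a /\ o a = x)) as [[a0 [Ha0 Hx]]|Hnone].
    + destruct (fixed_points_closed o g gi x Hg Hginv) as [rho [Hrho Hfar]].
      { intros b Hb Hbx. apply (Hdisj a0 Ha0). rewrite (coord_inj o a0 b); [exact Hb|lra]. }
      destruct (archimed_cor1 (rho / 2)) as [N [HN HNpos]]; [lra|].
      exists (rho / 2). split; [lra|]. exists N. intros y Hy a b Ha Hb <-.
      assert (/ (INR N + 1) <= / INR N).
      { apply Rinv_le_contravar; [apply lt_0_INR; exact HNpos|lra]. }
      specialize (Hfar b Hb).
      assert (Rabs (o b - x) <= Rabs (o a - o b) + Rabs (o a - x)).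
      { replace (o b - x) with (- (o a - o b) + (o a - x)) by ring.
        rewrite <- (Rabs_Ropp (o a - o b)). apply Rabs_triang. }
      lra.
    + destruct (fixed_points_closed o h hi x Hh Hhinv) as [rho [Hrho Hfar]].
      { intros a Ha Hax. apply Hnone. eauto. }
      exists rho. split; auto. exists O. intros y Hy a b Ha Hb <-.
      specialize (Hfar a Ha). lra.
  - exists (/ (INR N + 1)). split.
    { apply Rinv_0_lt_compat. pose proof (pos_INR N). lra. }
    intros a b Ha Hb. destruct (zpow_into_unit a) as [k Hk].
    specialize (HN _ Hk (zpow tau taui k a) (zpow tau taui k b)).
    rewrite !coord_zpow in HN.
    replace (o a + IZR k - (o b + IZR k)) with (o a - o b) in HN by ring.
    apply HN; [exact (fixed_zpow tau taui tau_inv h k a Hhc Ha)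
              |exact (fixed_zpow tau taui tau_inv g k b Hgc Hb) | reflexivity].
Qed.

End Periodic.

(** * Ping-pong *)

Definition free_words {X} (f f' g g' : X -> X) : Prop :=
  forall w, w <> nil -> reduced w -> exists x, eval_word f f' g g' w x <> x.

Section PingPong.
Context {X : Type} (f f' g g' : X -> X) (U V : X -> Prop) (a0 b0 : X).
Hypotheses (f_inv : inverse f f') (g_inv : inverse g g') (UV_disj : forall x, U x -> V x -> False)
  (f_pings : forall v k, V v -> (1 <= k)%nat -> U (Nat.iter k f v) /\ U (Nat.iter k f' v))
  (g_pongs : forall u k, U u -> (1 <= k)%nat -> V (Nat.iter k g u) /\ V (Nat.iter k g' u))
  (a0_in : U a0) (b0_in : V b0) (a0_fixed : f a0 = a0) (b0_fixed : g b0 = b0).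

Let letter_map := eval_letter f f' g g'.

(* Letters with [fst l = false] are [f] and [f'], which send [V] into [U]; the others are
   [g] and [g'], which send [U] into [V]. *)
Let source (l : letter) := if fst l then U else V.
Let target (l : letter) := if fst l then V else U.
(* A point of [source l] fixed by the letters of the other generator, so that no reduced
   word can return to it. *)
Let base (l : letter) := if fst l then a0 else b0.

Definition ping_set (l : letter) (x : X) : Prop :=
  exists k y, (1 <= k)%nat /\ source l y /\ x = Nat.iter k (letter_map l) y.

Lemma ping_set_target l x : ping_set l x -> target l x.
Proof.
  intros [k [y [Hk [Hy ->]]]].
  destruct l as [[|] [|]]; simpl in *; first [apply f_pings | apply g_pongs]; assumption.
Qed.

Lemma source_base l : source l (base l).
Proof. destruct l as [[|] ?]; assumption. Qed.

Lemma iter_fixed_point_unique (e e' : X -> X) k y p : inverse e e' -> e p = p ->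
  p = Nat.iter k e y -> y = p.
Proof.
  intros He Hp Heq.
  rewrite <- (proj1 (inverse_iter e e' k He) y), <- Heq.
  apply iter_fixed. exact (inverse_fixed e e' He p Hp).
Qed.

Lemma base_not_in_ping_set l : ~ ping_set l a0 /\ ~ ping_set l b0.
Proof.
  assert (f_inv' := inverse_sym f f' f_inv). assert (g_inv' := inverse_sym g g' g_inv).
  assert (a0_fixed' := inverse_fixed f f' f_inv a0 a0_fixed).
  assert (b0_fixed' := inverse_fixed g g' g_inv b0 b0_fixed).
  split; intros Hp; pose proof (ping_set_target l _ Hp) as Ht;
    destruct Hp as [k [y [Hk [Hy Heq]]]]; destruct l as [[|] [|]]; unfold source, target in *; simpl in *;
    first [ exact (UV_disj _ a0_in Ht) | exact (UV_disj _ Ht b0_in)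
          | eapply iter_fixed_point_unique in Heq; [subst y; eauto | eassumption | eassumption] ].
Qed.

Lemma ping_set_step l l' x : ~ (fst l = fst l' /\ snd l = negb (snd l')) ->
  ping_set l' x -> ping_set l (letter_map l x).
Proof.
  intros Hred Hx. destruct (Bool.bool_dec (fst l) (fst l')) as [Hsame|Hdiff].
  - assert (l = l') as <-.
    { destruct l as [gl sl], l' as [gl' sl']. simpl in *. subst.
      destruct sl, sl'; auto; exfalso; apply Hred; auto. }
    destruct Hx as [k [y [Hk [Hy ->]]]]. exists (S k), y. split; [lia|]. auto.
  - exists 1%nat, x. split; [lia|]. split; [|reflexivity].
    apply ping_set_target in Hx. unfold source, target in *.
    destruct l as [[|] ?], l' as [[|] ?]; simpl in *; congruence.
Qed.

Lemma reduced_word_in_ping_set w : forall l d x, reduced (l :: w) ->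
  source (last (l :: w) d) x -> ping_set l (eval_word f f' g g' (l :: w) x).
Proof.
  induction w as [|l2 w IH]; intros l d x Hred Hx.
  - exists 1%nat, x. split; [lia|]. auto.
  - destruct Hred as [Hl Hred]. apply (ping_set_step l l2 _ Hl). exact (IH l2 d x Hred Hx).
Qed.

Theorem ping_pong : free_words f f' g g'.
Proof.
  intros [|l w] Hne Hred; [contradiction|].
  exists (base (last (l :: w) l)). intros Heq.
  pose proof (reduced_word_in_ping_set w l l _ Hred (source_base _)) as Hin.
  rewrite Heq in Hin. unfold base in Hin.
  destruct (base_not_in_ping_set l) as [Ha0 Hb0].
  destruct (fst (last (l :: w) l)); [exact (Ha0 Hin) | exact (Hb0 Hin)].
Qed.

End PingPong.

Theorem periodic_free_powers {T} (o : closed_chain T) tau taui al ali be bei :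
  inverse tau taui -> (forall x, o (tau x) = o x + 1) ->
  increasing o al -> inverse al ali -> increasing o be -> inverse be bei ->
  commute al tau -> commute be tau -> (exists a, al a = a) -> (exists b, be b = b) ->
  (forall x, al x = x -> be x <> x) ->
  exists N M, free_words (Nat.iter N al) (Nat.iter N ali) (Nat.iter M be) (Nat.iter M bei).
Proof.
  intros Htau Htau1 Hal Hali Hbe Hbei Hcal Hcbe [a0 Ha0] [b0 Hb0] Hdisj.
  destruct (fixed_points_separated o tau taui Htau Htau1 al ali be bei Hal Hali Hbe Hbei
              Hcal Hcbe Hdisj) as [d [Hd Hsep]].
  assert (Hsep' : forall b a, be b = b -> al a = a -> d <= Rabs (o b - o a)).
  { intros b a Hb Ha. rewrite Rabs_minus_sym. auto. }
  destruct (uniform_convergence o tau taui Htau Htau1 al ali (d / 2) Hal Hali Hcal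
              (ex_intro _ a0 Ha0)) as [N HN]; [lra|].
  destruct (uniform_convergence o tau taui Htau Htau1 be bei (d / 2) Hbe Hbei Hcbe
              (ex_intro _ b0 Hb0)) as [M HM]; [lra|].
  exists (S N), (S M).
  apply (ping_pong _ _ _ _ (near o al (d / 2)) (near o be (d / 2)) a0 b0).
  - apply inverse_iter. exact Hali.
  - apply inverse_iter. exact Hbei.
  - intros x Hx Hx'. exact (near_separated o al be d x Hsep Hx' Hx).
  - intros v k Hv Hk. rewrite <- !iter_mul.
    apply HN; [exact (near_separated o al be d v Hsep Hv) | nia].
  - intros u k Hu Hk. rewrite <- !iter_mul.
    apply HM; [exact (near_separated o be al d u Hsep' Hu) | nia].
  - apply near_fixed; [exact Ha0 | lra].
  - apply near_fixed; [exact Hb0 | lra].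
  - apply iter_fixed. exact Ha0.
  - apply iter_fixed. exact Hb0.
Qed.

(** * Straightening a fixed-point-free bijection *)

Lemma increasing_left_continuous {T} (o : closed_chain T) h hi : increasing o h -> inverse h hi ->
  forall s e, 0 < e -> exists d, 0 < d /\ forall x, o s - d < o x <= o s -> o (h s) - e < o (h x).
Proof.
  intros Hh Hinv s e He.
  set (S := fun y => o y <= o (h s) - e).
  destruct (classic (exists y, S y)) as [Hne|Hempty].
  2:{ exists 1. split; [lra|]. intros x _. apply Rnot_le_lt. intros Hx. apply Hempty. exists (h x). exact Hx. }
  destruct (has_sup o S Hne) as [m [Hub Happ]].
  { exists (o (h s) - e). intros y Hy. exact Hy. }
  assert (Hm : o m <= o (h s) - e).
  { destruct (Rle_or_lt (o m) (o (h s) - e)) as [|Hlt]; auto.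
    destruct (Happ (o m - (o (h s) - e))) as [y [Hy Hy']]; [lra|]. unfold S in Hy. lra. }
  assert (Hms : o (hi m) < o s).
  { apply (increasing_lt_rev o h Hh). rewrite (proj2 Hinv). lra. }
  exists (o s - o (hi m)). split; [lra|]. intros x [Hx _].
  apply Rnot_le_lt. intros Hhx.
  assert (o (h x) <= o m) by (apply Hub; exact Hhx).
  assert (o m < o (h x)).
  { rewrite <- (proj2 Hinv m) at 1. apply Hh. lra. }
  lra.
Qed.

Lemma increasing_right_continuous {T} (o : closed_chain T) h hi : increasing o h -> inverse h hi ->
  forall s e, 0 < e -> exists d, 0 < d /\ forall x, o s <= o x < o s + d -> o (h x) < o (h s) + e.
Proof.
  intros Hh Hinv s e He.
  destruct (increasing_left_continuous (dual o) h hi (increasing_dual o h Hh) Hinv s e He)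
    as [d [Hd Hcont]].
  exists d. split; auto. intros x Hx. specialize (Hcont x). rewrite !dual_coord in Hcont. lra.
Qed.

Section Transfer.
Context {T : Type} (o : closed_chain T) (f : T -> R).
Hypotheses (f_order : forall x y, o x < o y <-> f x < f y)
  (f_bounded : forall M, exists c, forall x, f x <= M -> o x <= o c)
  (f_left_continuous : forall s e, 0 < e ->
     exists d, 0 < d /\ forall x, o s - d < o x <= o s -> f s - e < f x).

Lemma transfer_le x y : o x <= o y -> f x <= f y.
Proof.
  intros Hxy. destruct (Rle_lt_or_eq_dec _ _ Hxy) as [Hlt|Heq].
  - left. apply f_order. exact Hlt.
  - rewrite (coord_inj o x y Heq). lra.
Qed.

Lemma transfer_sup S : (exists x, S x) -> (exists M, forall x, S x -> f x <= M) ->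
  exists s, is_sup_on f S s.
Proof.
  intros Hne [M HM]. destruct (f_bounded M) as [c Hc].
  destruct (has_sup o S Hne) as [s [Hub Happ]].
  { exists (o c). intros x Sx. apply Hc, HM, Sx. }
  exists s. split.
  - intros x Sx. apply transfer_le, Hub, Sx.
  - intros e He. destruct (f_left_continuous s e He) as [d [Hd Hcont]].
    destruct (Happ d Hd) as [x [Sx Hx]]. exists x. split; [exact Sx|].
    apply Hcont. split; auto.
Qed.

End Transfer.

Lemma continuous_recoordinatization {T} (o : closed_chain T) (f : T -> R) :
  (forall x y, o x < o y <-> f x < f y) ->
  (forall M, exists c, forall x, f x <= M -> o x <= o c) ->
  (forall M, exists c, forall x, M <= f x -> o c <= o x) ->
  (forall s e, 0 < e -> exists d, 0 < d /\ forall x, o s - d < o x <= o s -> f s - e < f x) ->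
  (forall s e, 0 < e -> exists d, 0 < d /\ forall x, o s <= o x < o s + d -> f x < f s + e) ->
  exists o' : closed_chain T, forall x, o' x = f x.
Proof.
  intros Hord Hup Hdown Hleft Hright.
  assert (Hinj : forall x y, f x = f y -> x = y).
  { intros x y Hxy. apply (coord_inj o).
    destruct (Rtotal_order (o x) (o y)) as [Hlt|[Heq|Hgt]]; auto;
      [apply Hord in Hlt | apply Hord in Hgt]; lra. }
  assert (Hinf : forall S, (exists x, S x) -> (exists M, forall x, S x -> M <= f x) ->
            exists s, is_inf_on f S s).
  { intros S Hne [M HM].
    destruct (transfer_sup (dual o) (fun x => - f x)) with (S := S) as [s [Hub Happ]]; auto.
    - intros x y. rewrite !dual_coord. specialize (Hord y x). lra.
    - intros M'. destruct (Hdown (- M')) as [c Hc]. exists c. intros x Hx.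
      rewrite !dual_coord. specialize (Hc x). lra.
    - intros s e He. destruct (Hright s e He) as [d [Hd Hcont]]. exists d. split; auto.
      intros x. rewrite !dual_coord. specialize (Hcont x). lra.
    - exists (- M). intros x Sx. specialize (HM x Sx). lra.
    - exists s. split.
      + intros x Sx. specialize (Hub x Sx). lra.
      + intros e He. destruct (Happ e He) as [x [Sx Hx]]. exists x. split; auto. lra. }
  exists {| coord := f; coord_inj := Hinj; has_sup := transfer_sup o f Hord Hup Hleft;
            has_inf := Hinf |}.
  reflexivity.
Qed.

Lemma nat_transition (P : nat -> Prop) N : P O -> ~ P N -> exists j, P j /\ ~ P (S j).
Proof.
  intros H0 HN. induction N as [|N IH]; [contradiction|].
  destruct (classic (P N)) as [HP|HP]; eauto.
Qed.

Lemma div_lt_shift a b c e L : 0 < L -> a - e * L < b -> (a - c) / L - e < (b - c) / L.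
Proof.
  intros HL Hab. replace ((a - c) / L - e) with ((a - e * L - c) / L) by (field; lra).
  unfold Rdiv. apply Rmult_lt_compat_r; [apply Rinv_0_lt_compat; exact HL | lra].
Qed.

Section Straighten.
Context {T : Type} (o : closed_chain T) (t ti : T -> T) (x0 : T).
Hypotheses (t_incr : increasing o t) (t_inv : inverse t ti) (t_up : forall x, o x < o (t x)).

Notation z := (zpow t ti).

Lemma zpow_comp a b x : z a (z b x) = z (a + b) x.
Proof. symmetry. apply zpow_add. exact t_inv. Qed.

Lemma zpow_lt k k' x : (k < k')%Z -> o (z k x) < o (z k' x).
Proof.
  intros Hk. replace k' with (k + Z.of_nat (S (Z.to_nat (k' - k - 1))))%Z by lia.
  induction (Z.to_nat (k' - k - 1)) as [|n IH].
  - replace (k + Z.of_nat 1)%Z with (k + 1)%Z by lia.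
    rewrite zpow_succ by exact t_inv. apply t_up.
  - replace (k + Z.of_nat (S (S n)))%Z with (k + Z.of_nat (S n) + 1)%Z by lia.
    rewrite zpow_succ by exact t_inv. pose proof (t_up (z (k + Z.of_nat (S n)) x)). lra.
Qed.

Lemma zpow_le k k' x : (k <= k')%Z -> o (z k x) <= o (z k' x).
Proof.
  intros Hk. destruct (Z.eq_dec k k') as [<-|Hne]; [lra|]. left. apply zpow_lt. lia.
Qed.

Lemma orbit_unbounded_above M : exists k, M < o (z k x0).
Proof.
  apply NNPP. intros Hnot.
  destruct (orbit_sup_fixed o t ti t_incr t_inv x0 (t_up x0)) as [s [Hs _]].
  - exists M. intros n. apply Rnot_lt_le. intros Hlt. apply Hnot.
    exists (Z.of_nat n). rewrite zpow_of_nat. exact Hlt.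
  - pose proof (t_up s) as Hup. rewrite Hs in Hup. lra.
Qed.

Lemma orbit_unbounded_below M : exists k, o (z k x0) < M.
Proof.
  apply NNPP. intros Hnot.
  assert (ti_incr := increasing_dual o ti (increasing_inverse o t ti t_incr t_inv)).
  destruct (orbit_sup_fixed (dual o) ti t ti_incr (inverse_sym t ti t_inv) x0) as [s [Hs _]].
  - rewrite !dual_coord. pose proof (t_up (ti x0)) as Hup. rewrite (proj2 t_inv) in Hup. lra.
  - exists (- M). intros n. rewrite dual_coord. apply Ropp_le_contravar, Rnot_lt_le. intros Hlt.
    apply Hnot. exists (- Z.of_nat n)%Z. rewrite zpow_opp_of_nat. exact Hlt.
  - pose proof (t_up s) as Hup.
    rewrite (inverse_fixed ti t (inverse_sym t ti t_inv) s Hs) in Hup. lra.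
Qed.

Definition in_domain k x := o (z k x0) <= o x < o (z (k + 1) x0).

Lemma in_domain_exists x : exists k, in_domain k x.
Proof.
  destruct (orbit_unbounded_below (o x)) as [k1 Hk1].
  destruct (orbit_unbounded_above (o x)) as [k2 Hk2].
  assert (Hk12 : (k1 < k2)%Z).
  { destruct (Z_lt_le_dec k1 k2) as [|Hle]; auto. apply (zpow_le _ _ x0) in Hle. lra. }
  destruct (nat_transition (fun j => o (z (k1 + Z.of_nat j) x0) <= o x) (Z.to_nat (k2 - k1)))
    as [j [Hj Hj']].
  - rewrite Z.add_0_r. lra.
  - rewrite Z2Nat.id by lia. replace (k1 + (k2 - k1))%Z with k2 by lia. lra.
  - exists (k1 + Z.of_nat j)%Z. split; auto.
    rewrite Nat2Z.inj_succ, <- Z.add_1_r, Z.add_assoc in Hj'. lra.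
Qed.

Lemma in_domain_unique k k' x : in_domain k x -> in_domain k' x -> k = k'.
Proof.
  intros [H1 H2] [H1' H2']. destruct (Z.lt_trichotomy k k') as [Hlt|[|Hlt]]; auto; exfalso.
  - pose proof (zpow_le (k + 1) k' x0 ltac:(lia)). lra.
  - pose proof (zpow_le (k' + 1) k x0 ltac:(lia)). lra.
Qed.

Definition domain_index x : Z := proj1_sig (constructive_indefinite_description _ (in_domain_exists x)).

Lemma domain_index_spec x : in_domain (domain_index x) x.
Proof. unfold domain_index. destruct (constructive_indefinite_description _ _). assumption. Qed.

Lemma period_pos : 0 < o (t x0) - o x0.
Proof. pose proof (t_up x0). lra. Qed.

(* The coordinate of [x] in the fundamental domain [[z^k x0, z^(k+1) x0)], pulled back to
   [[x0, t x0)] and rescaled affinely onto [[k, k + 1)]. *)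
Definition straight x : R :=
  IZR (domain_index x) + (o (z (- domain_index x) x) - o x0) / (o (t x0) - o x0).

Lemma in_domain_pullback k x : in_domain k x -> o x0 <= o (z (- k) x) < o (t x0).
Proof.
  intros [H1 H2]. assert (Hz := zpow_increasing t ti t_inv o (- k) t_incr).
  pose proof (increasing_le o _ Hz _ _ H1) as Hlo. pose proof (Hz _ _ H2) as Hhi.
  rewrite zpow_comp in Hlo, Hhi.
  replace (- k + k)%Z with 0%Z in Hlo by lia. replace (- k + (k + 1))%Z with 1%Z in Hhi by lia.
  split; assumption.
Qed.

Lemma straight_in_domain k x : in_domain k x ->
  straight x = IZR k + (o (z (- k) x) - o x0) / (o (t x0) - o x0).
Proof.
  intros Hk. unfold straight. rewrite (in_domain_unique _ k x (domain_index_spec x) Hk). reflexivity.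
Qed.

Lemma straight_fraction_bounds k x : in_domain k x ->
  0 <= (o (z (- k) x) - o x0) / (o (t x0) - o x0) < 1.
Proof.
  intros Hk. pose proof (in_domain_pullback k x Hk). pose proof period_pos.
  split.
  - unfold Rdiv. apply Rmult_le_pos; [lra|]. left. apply Rinv_0_lt_compat. lra.
  - apply (Rmult_lt_reg_r (o (t x0) - o x0)); [lra|].
    unfold Rdiv. rewrite Rmult_assoc, Rinv_l by lra. lra.
Qed.

Lemma zpow_in_domain k : in_domain k (z k x0).
Proof. split; [lra|]. apply zpow_lt. lia. Qed.

Lemma straight_orbit k : straight (z k x0) = IZR k.
Proof.
  rewrite (straight_in_domain k _ (zpow_in_domain k)), zpow_comp.
  replace (- k + k)%Z with 0%Z by lia. unfold Rminus at 1. rewrite Rplus_opp_r. unfold Rdiv. ring.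
Qed.

Lemma straight_in_domain_right k x : o (z k x0) < o x <= o (z (k + 1) x0) ->
  straight x = IZR k + (o (z (- k) x) - o x0) / (o (t x0) - o x0).
Proof.
  intros [H1 H2]. destruct (Rle_lt_or_eq_dec _ _ H2) as [Hlt|Heq].
  - apply straight_in_domain. split; lra.
  - rewrite (coord_inj o _ _ Heq), straight_orbit, zpow_comp, plus_IZR.
    replace (- k + (k + 1))%Z with 1%Z by lia. change (z 1 x0) with (t x0).
    rewrite Rdiv_diag; [reflexivity|]. pose proof period_pos. lra.
Qed.

Lemma straight_lt x y : o x < o y -> straight x < straight y.
Proof.
  intros Hxy. pose proof (domain_index_spec x) as Hx. pose proof (domain_index_spec y) as Hy.
  rewrite (straight_in_domain _ x Hx), (straight_in_domain _ y Hy).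
  pose proof (straight_fraction_bounds _ x Hx). pose proof (straight_fraction_bounds _ y Hy).
  destruct (Z.lt_trichotomy (domain_index x) (domain_index y)) as [Hlt|[Heq|Hgt]].
  - assert (IZR (domain_index x) + 1 <= IZR (domain_index y)).
    { rewrite <- plus_IZR. apply IZR_le. lia. }
    lra.
  - rewrite Heq. apply Rplus_lt_compat_l. unfold Rdiv. apply Rmult_lt_compat_r.
    + apply Rinv_0_lt_compat, period_pos.
    + apply Rplus_lt_compat_r. apply (zpow_increasing t ti t_inv o _ t_incr). exact Hxy.
  - exfalso. destruct Hx as [Hx _], Hy as [_ Hy].
    pose proof (zpow_le (domain_index y + 1) (domain_index x) x0 ltac:(lia)). lra.
Qed.

Lemma straight_order x y : o x < o y <-> straight x < straight y.
Proof.
  split; [apply straight_lt|]. intros Hxy.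
  destruct (Rtotal_order (o x) (o y)) as [|[Heq|Hgt]]; auto.
  - rewrite (coord_inj o x y Heq) in Hxy. lra.
  - apply straight_lt in Hgt. lra.
Qed.

Lemma straight_shift x : straight (t x) = straight x + 1.
Proof.
  pose proof (domain_index_spec x) as Hx. set (k := domain_index x) in Hx.
  assert (Htx : in_domain (k + 1) (t x)).
  { destruct Hx as [H1 H2]. unfold in_domain. change (t x) with (z 1 x).
    assert (E : forall m, z (m + 1) x0 = z 1 (z m x0))
      by (intros m; rewrite zpow_comp, Z.add_comm; reflexivity).
    rewrite !E. rewrite E in H2.
    assert (Hz := zpow_increasing t ti t_inv o 1 t_incr).
    split; [apply (increasing_le o _ Hz); exact H1 | apply Hz; exact H2]. }
  rewrite (straight_in_domain _ _ Htx), (straight_in_domain _ _ Hx), plus_IZR.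
  change (t x) with (z 1 x). rewrite zpow_comp.
  replace (- (k + 1) + 1)%Z with (- k)%Z by lia. ring.
Qed.

Lemma straight_bounded_above M : exists c, forall x, straight x <= M -> o x <= o c.
Proof.
  exists (z (up M) x0). intros x Hx. apply Rnot_lt_le. intros Hlt.
  apply straight_lt in Hlt. rewrite straight_orbit in Hlt. destruct (archimed M). lra.
Qed.

Lemma straight_bounded_below M : exists c, forall x, M <= straight x -> o c <= o x.
Proof.
  exists (z (- up (- M)) x0). intros x Hx. apply Rnot_lt_le. intros Hlt.
  apply straight_lt in Hlt. rewrite straight_orbit, opp_IZR in Hlt. destruct (archimed (- M)). lra.
Qed.

Lemma straight_left_continuous s e : 0 < e ->
  exists d, 0 < d /\ forall x, o s - d < o x <= o s -> straight s - e < straight x.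
Proof.
  intros He. pose proof period_pos as HL.
  (* On a domain closed on the right, [straight] is an affine function of [o (z (- j) x)]. *)
  assert (Hj : exists j, o (z j x0) < o s <= o (z (j + 1) x0)).
  { destruct (domain_index_spec s) as [H1 H2]. destruct (Rle_lt_or_eq_dec _ _ H1) as [Hlt|Heq].
    - exists (domain_index s). lra.
    - exists (domain_index s - 1)%Z. replace (domain_index s - 1 + 1)%Z with (domain_index s) by lia.
      split; [|lra]. rewrite <- Heq. apply zpow_lt. lia. }
  destruct Hj as [j Hj].
  destruct (increasing_left_continuous o (z (- j)) (z (- - j))
              (zpow_increasing t ti t_inv o _ t_incr) (zpow_inverse t ti t_inv _) s
              (e * (o (t x0) - o x0))) as [d [Hd Hcont]].
  { apply Rmult_lt_0_compat; lra. }
  exists (Rmin d (o s - o (z j x0))). split; [apply Rmin_glb_lt; lra|].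
  intros x Hx. pose proof (Rmin_l d (o s - o (z j x0))). pose proof (Rmin_r d (o s - o (z j x0))).
  rewrite (straight_in_domain_right j s Hj), (straight_in_domain_right j x) by lra.
  assert (Hpull : o (z (- j) s) - e * (o (t x0) - o x0) < o (z (- j) x)) by (apply Hcont; lra).
  pose proof (div_lt_shift _ _ (o x0) e _ HL Hpull). lra.
Qed.

Lemma straight_right_continuous s e : 0 < e ->
  exists d, 0 < d /\ forall x, o s <= o x < o s + d -> straight x < straight s + e.
Proof.
  intros He. pose proof period_pos as HL.
  pose proof (domain_index_spec s) as Hs. set (j := domain_index s) in Hs.
  destruct (increasing_right_continuous o (z (- j)) (z (- - j))
              (zpow_increasing t ti t_inv o _ t_incr) (zpow_inverse t ti t_inv _) s
              (e * (o (t x0) - o x0))) as [d [Hd Hcont]].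
  { apply Rmult_lt_0_compat; lra. }
  destruct Hs as [Hs1 Hs2].
  exists (Rmin d (o (z (j + 1) x0) - o s)). split; [apply Rmin_glb_lt; lra|].
  intros x Hx. pose proof (Rmin_l d (o (z (j + 1) x0) - o s)).
  pose proof (Rmin_r d (o (z (j + 1) x0) - o s)).
  rewrite (straight_in_domain j s), (straight_in_domain j x) by (split; lra).
  assert (Hpull : o (z (- j) x) - e * (o (t x0) - o x0) < o (z (- j) s)) by (specialize (Hcont x); lra).
  pose proof (div_lt_shift _ _ (o x0) e _ HL Hpull). lra.
Qed.

End Straighten.

Theorem straighten {T} (o : closed_chain T) (t ti : T -> T) (x0 : T) :
  increasing o t -> inverse t ti -> (forall x, o x < o (t x)) ->
  exists o' : closed_chain T, (forall x, o' (t x) = o' x + 1) /\ (forall x y, o x < o y <-> o' x < o' y).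
Proof.
  intros Ht Htinv Hup.
  destruct (continuous_recoordinatization o (straight o t ti x0 Ht Htinv Hup))
    as [o' Ho'].
  - apply straight_order.
  - apply straight_bounded_above.
  - apply straight_bounded_below.
  - apply straight_left_continuous.
  - apply straight_right_continuous.
  - exists o'. split; intros; rewrite !Ho'; [apply straight_shift | apply straight_order].
Qed.

Lemma increasing_transfer {T} (o o' : closed_chain T) h :
  (forall x y, o x < o y <-> o' x < o' y) -> increasing o h -> increasing o' h.
Proof. intros Hord Hh x y Hxy. apply Hord, Hh, Hord, Hxy. Qed.

Theorem free_powers_of_commuting_pair {T} (o : closed_chain T) z zi al ali be bei :
  increasing o z -> inverse z zi -> (forall x, z x <> x) ->
  increasing o al -> inverse al ali -> increasing o be -> inverse be bei ->
  commute al z -> commute be z -> (exists a, al a = a) -> (exists b, be b = b) ->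
  (forall x, al x = x -> be x <> x) ->
  exists N M, free_words (Nat.iter N al) (Nat.iter N ali) (Nat.iter M be) (Nat.iter M bei).
Proof.
  intros Hz Hzinv Hnofix Hal Hali Hbe Hbei Hcal Hcbe [a0 Ha0] Hb Hdisj.
  assert (Hshift : exists t ti, increasing o t /\ inverse t ti /\ (forall x, o x < o (t x)) /\
                     commute al t /\ commute be t).
  { destruct (fixed_point_free_sign o z zi Hz Hzinv Hnofix) as [Hup|Hdown].
    - exists z, zi. auto.
    - exists zi, z. repeat split.
      + exact (increasing_inverse o z zi Hz Hzinv).
      + exact (proj2 Hzinv).
      + exact (proj1 Hzinv).
      + intros x. rewrite <- (proj2 Hzinv x) at 1. apply Hdown.
      + exact (commute_sym _ _ (commute_inverse z zi al Hzinv (commute_sym _ _ Hcal))).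
      + exact (commute_sym _ _ (commute_inverse z zi be Hzinv (commute_sym _ _ Hcbe))). }
  destruct Hshift as [t [ti [Ht [Htinv [Hup [Hcalt Hcbet]]]]]].
  destruct (straighten o t ti a0 Ht Htinv Hup) as [o' [Hunit Hord]].
  apply (periodic_free_powers o' t ti); auto.
  - apply (increasing_transfer o); assumption.
  - apply (increasing_transfer o); assumption.
  - exists a0. exact Ha0.
Qed.

Lemma gen2_iter W a b h n : gen2 W a b h -> gen2 W a b (Nat.iter n h).
Proof.
  intros Hh. induction n as [|n IH].
  - exact (gen2_id W a b).
  - exact (gen2_comp W a b h (Nat.iter n h) Hh IH).
Qed.

Theorem lemma4p1 (W : R -> Prop) (alpha beta z : Wt W -> Wt W) :
  closed_set W -> (exists x, W x) ->
  is_aut W alpha -> is_aut W beta -> is_aut W z ->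
  (forall x, ~ Fix W z x) ->
  (forall x, z (alpha x) = alpha (z x)) ->
  (forall x, z (beta x) = beta (z x)) ->
  (exists x, Fix W alpha x) -> (exists x, Fix W beta x) ->
  (forall x, Fix W alpha x -> ~ Fix W beta x) ->
  contains_nonabelian_free W (gen2 W alpha beta).
Proof.
  intros HW _ [[ai [Ha1 Ha2]] Hal] [[bi [Hb1 Hb2]] Hbe] [[zi [Hz1 Hz2]] Hz]
    Hnofix Hza Hzb Hafix Hbfix Hdisj.
  destruct (closed_set_chain W HW) as [o Ho].
  assert (Hincr : forall h, (forall x y, proj1_sig x < proj1_sig y -> proj1_sig (h x) < proj1_sig (h y)) ->
            increasing o h) by (intros h Hh x y; rewrite !Ho; apply Hh).
  destruct (free_powers_of_commuting_pair o z zi alpha ai beta bi (Hincr z Hz) (conj Hz1 Hz2)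
              Hnofix (Hincr alpha Hal) (conj Ha1 Ha2) (Hincr beta Hbe) (conj Hb1 Hb2)
              (commute_sym _ _ Hza) (commute_sym _ _ Hzb) Hafix Hbfix Hdisj) as [N [M Hfree]].
  exists (Nat.iter N alpha), (Nat.iter N ai), (Nat.iter M beta), (Nat.iter M bi).
  destruct (inverse_iter alpha ai N (conj Ha1 Ha2)) as [HN1 HN2].
  destruct (inverse_iter beta bi M (conj Hb1 Hb2)) as [HM1 HM2].
  repeat split; auto; apply gen2_iter; constructor.
Qed.
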